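(* Let $C,A^1,\dots,A^m\in\mathbb{S}^n$, $b\in\mathbb{R}^m$, with $\mathbf{P}$ and $\mathbf{D}$ feasible and $\mathbf{D}$ of singularity degree one, and let $0\le r<n$ be such that, writing $L(y)=C-\sum_iA^iy_i$ in blocks $L_{11}(y)\in\mathbb{S}^r$, $L_{12}(y)\in\mathbb{R}^{r\times(n-r)}$, $L_{22}(y)\in\mathbb{S}^{n-r}$: (a) for every $y$, $L(y)\succeq0$ iff $L_{12}(y)=0$, $L_{22}(y)=0$, $L_{11}(y)\succeq0$; (b) some $y$ has $L_{12}(y)=0$, $L_{22}(y)=0$, $L_{11}(y)\succ0$; (c) there is $X=\mathrm{diag}(0,X_{22})$ with $X_{22}\succ0$, $C\bullet X=0$, $A^i\bullet X=0$ for all $i$. Let $M>0$ be a constant such that for all $t\ge0$ and $y$, $L_{22}(y)+tI_{22}\succeq0$ implies $tMI_{22}\succeq L_{22}(y)+tI_{22}$, and set $K:=M(v(\mathbf{P})-v(\mathbf{D})+2)$. For $\alpha>0$, $t>0$ let $u_2(\alpha,t)$ be the optimal value (supremum) of $$\mathbf{RD2}(\alpha,t):\ \max_y\ b^Ty\ \text{ s.t. } L(y)+t\alpha I\succeq0,\ \ \|L_{12}(y)\|_F^2\le K\alpha .$$ Then for every $\alpha>0$, the limit $\bar u(\alpha):=\lim_{t\downarrow0}u_2(\alpha,t)$ exists and is finite.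
   Context: $\mathbf{P}$: $\min_X C\bullet X$ s.t. $A^i\bullet X=b_i$, $X\succeq0$; $\mathbf{D}$: $\max_y b^Ty$ s.t. $C-\sum_iA^iy_i\succeq0$; $v(\mathbf{P}),v(\mathbf{D})$ are their (finite) optimal values. $\mathbf{D}$ has singularity degree one if it is feasible and there exists a nonzero $X\succeq0$ with $C\bullet X=0$, $A^i\bullet X=0$ for all $i$, such that some $y$ has $C-\sum_iA^iy_i$ in the relative interior of $\{Z\succeq0: Z\bullet X=0\}$. $\|\cdot\|_F$ is the Frobenius norm; $I_{22}$ is the $(n-r)\times(n-r)$ identity. *)

From HB Require Import structures.
From mathcomp Require Import all_boot all_order all_algebra.
From mathcomp Require Import all_classical all_reals all_analysis.
Set Implicit Arguments. Unset Strict Implicit. Unset Printing Implicit Defensive.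
Import Order.TTheory GRing.Theory Num.Theory.
Import numFieldNormedType.Exports.
Local Open Scope classical_set_scope.
Local Open Scope ring_scope.

Section SDP.
Variable R : realType.

Definition symm n (X : 'M[R]_n) : Prop := X^T = X.

Definition psd n (X : 'M[R]_n) : Prop :=
  symm X /\ forall v : 'rV[R]_n, 0 <= (v *m X *m v^T) 0 0.

Definition pd n (X : 'M[R]_n) : Prop :=
  symm X /\ forall v : 'rV[R]_n, v != 0 -> 0 < (v *m X *m v^T) 0 0.

Definition inner p q (A X : 'M[R]_(p, q)) : R := \sum_i \sum_j A i j * X i j.

Definition frob2 p q (X : 'M[R]_(p, q)) : R := inner X X.

Definition dotv m (b y : 'I_m -> R) : R := \sum_i b i * y i.

Definition Lmap n m (C : 'M[R]_n) (A : 'I_m -> 'M[R]_n) (y : 'I_m -> R) : 'M[R]_n :=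
  C - \sum_i y i *: A i.

Definition P_feasible n m (A : 'I_m -> 'M[R]_n) (b : 'I_m -> R) (X : 'M[R]_n) : Prop :=
  psd X /\ forall i, inner (A i) X = b i.

Definition D_feasible n m (C : 'M[R]_n) (A : 'I_m -> 'M[R]_n) (y : 'I_m -> R) : Prop :=
  psd (Lmap C A y).

(* optimal values (finite under primal and dual feasibility, by weak duality) *)
Definition vP n m (C : 'M[R]_n) (A : 'I_m -> 'M[R]_n) (b : 'I_m -> R) : R :=
  inf [set inner C X | X in P_feasible A b].

Definition vD n m (C : 'M[R]_n) (A : 'I_m -> 'M[R]_n) (b : 'I_m -> R) : R :=
  sup [set dotv b y | y in D_feasible C A].

Definition aff_hull n (S : set 'M[R]_n) : set 'M[R]_n :=
  [set Z | exists (k : nat) (p : 'I_k -> 'M[R]_n) (lam : 'I_k -> R),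
      (forall i, S (p i)) /\ \sum_i lam i = 1 /\ Z = \sum_i lam i *: p i].

Definition relint n (S : set 'M[R]_n) : set 'M[R]_n :=
  [set Z | S Z /\ exists e : R, 0 < e /\
     forall W, aff_hull S W -> (forall i j, `|W i j - Z i j| < e) -> S W].

Definition face_of n (X : 'M[R]_n) : set 'M[R]_n :=
  [set Z | psd Z /\ inner Z X = 0].

Definition sing_deg_one n m (C : 'M[R]_n) (A : 'I_m -> 'M[R]_n) : Prop :=
  (exists y, D_feasible C A y) /\
  exists X : 'M[R]_n, X != 0 /\ psd X /\ inner C X = 0 /\
    (forall i, inner (A i) X = 0) /\
    exists y, relint (face_of X) (Lmap C A y).

Definition u2 r s m (C : 'M[R]_(r + s)) (A : 'I_m -> 'M[R]_(r + s)) (b : 'I_m -> R)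
    (K alpha t : R) : \bar R :=
  ereal_sup [set (dotv b y)%:E | y in
     [set y | psd (Lmap C A y + (t * alpha)%:M) /\
              frob2 (ursubmx (Lmap C A y)) <= K * alpha]].

End SDP.

From HB Require Import structures.
From mathcomp Require Import all_boot all_order all_algebra.
From mathcomp Require Import all_classical all_reals all_analysis.
From mathcomp Require Import ring lra.
Import Order.TTheory GRing.Theory Num.Theory.
Import numFieldNormedType.Exports.
Local Open Scope classical_set_scope.
Local Open Scope ring_scope.
Set Implicit Arguments. Unset Strict Implicit. Unset Printing Implicit Defensive.

(* Enlarging [t] only relaxes the constraint [L(y) + t alpha I >= 0], so
   [u2 alpha] is nondecreasing in [t] and has a right limit at [0] in the
   extended reals.  By weak duality [v(P) >= v(D)], hence [K >= 0], so a dual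
   feasible [y0] (which has [L12(y0) = 0] by (a)) is feasible for every
   [RD2(alpha, t)] and bounds [u2] below by [b^T y0]; weak duality against a
   primal feasible [X] bounds [u2 alpha 1] above.  So the limit is finite.
   Hypotheses (b), (c), the singularity degree and the bound through [M] only
   matter for the value of the limit, not for its existence. *)

Section PsdMatrices.
Variable R : realType.

Definition qform n (X : 'M[R]_n) (u v : 'rV[R]_n) : R := (u *m X *m v^T) 0 0.

Lemma qform_sym n (X : 'M[R]_n) u v : symm X -> qform X u v = qform X v u.
Proof.
move=> sX; rewrite /qform.
have -> : v *m X *m u^T = (u *m X *m v^T)^T by rewrite !trmx_mul trmxK sX mulmxA.
by rewrite [RHS]mxE.
Qed.

Lemma qform_subZ n (X : 'M[R]_n) v u (l : R) : symm X ->
  qform X (v - l *: u) (v - l *: u)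
  = qform X v v - 2 * l * qform X v u + l ^+ 2 * qform X u u.
Proof.
move=> sX; have := qform_sym u v sX; rewrite /qform.
have -> : (v - l *: u)^T = v^T - l *: u^T by rewrite linearB linearZ.
rewrite !mulmxBl !mulmxBr -!scalemxAl -!scalemxAr.
move: (v *m X *m v^T) (v *m X *m u^T) (u *m X *m v^T) (u *m X *m u^T).
by move=> vv vu uv uu; rewrite !mxE => ->; ring.
Qed.

Lemma qform_delta n (X : 'M[R]_n) u j : qform X u 'e_j = (u *m X) 0 j.
Proof. by rewrite /qform trmx_delta -colE mxE. Qed.

Lemma qform_delta_delta n (X : 'M[R]_n) i j : qform X 'e_i 'e_j = X i j.
Proof. by rewrite qform_delta -rowE mxE. Qed.

Lemma psd_diag_ge0 n (X : 'M[R]_n) i : psd X -> 0 <= X i i.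
Proof. by move=> [_ pX]; rewrite -qform_delta_delta; apply: pX. Qed.

(* Were [c := qform X v 'e_i] nonzero, [v - ((qform X v v + 1) / 2c) 'e_i]
   would have form value [-1]. *)
Lemma psd_qform_delta_eq0 n (X : 'M[R]_n) i v :
  psd X -> X i i = 0 -> qform X v 'e_i = 0.
Proof.
move=> [sX pX] Xii; apply/eqP/negP => /negP c_neq0.
have := pX (v - ((qform X v v + 1) / (2 * qform X v 'e_i)) *: 'e_i).
rewrite -/(qform _ _ _) qform_subZ // qform_delta_delta Xii mulr0 addr0.
have -> : 2 * ((qform X v v + 1) / (2 * qform X v 'e_i)) * qform X v 'e_i
          = qform X v v + 1 by field.
by rewrite opprD addrA subrr add0r oppr_ge0 ler10.
Qed.

Lemma psd_col_eq0 n (X : 'M[R]_n) i j : psd X -> X i i = 0 -> X j i = 0.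
Proof. by move=> pX Xii; rewrite -qform_delta_delta psd_qform_delta_eq0. Qed.

Lemma psd_row_eq0 n (X : 'M[R]_n) i j : psd X -> X i i = 0 -> X i j = 0.
Proof.
move=> pX Xii; have [sX _] := pX.
by rewrite -[X]sX mxE psd_col_eq0.
Qed.

Definition schur n (X : 'M[R]_n) i := X - (X i i)^-1 *: ((row i X)^T *m row i X).

Lemma schur_entry n (X : 'M[R]_n) i j k :
  schur X i j k = X j k - (X i i)^-1 * (X i j * X i k).
Proof. by rewrite !mxE big_ord1 !mxE. Qed.

Lemma qform_mxBZ n (X Y : 'M[R]_n) c u v :
  qform (X - c *: Y) u v = qform X u v - c * qform Y u v.
Proof. by rewrite /qform mulmxBr mulmxBl -scalemxAr -scalemxAl !mxE. Qed.

Lemma qform_rank1 n (w u v : 'rV[R]_n) :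
  qform (w^T *m w) u v = (u *m w^T) 0 0 * (w *m v^T) 0 0.
Proof. by rewrite /qform !mulmxA -(mulmxA (u *m _)) [LHS]mxE big_ord1. Qed.

Lemma qform_schur n (X : 'M[R]_n) i v : symm X ->
  qform (schur X i) v v = qform X v v - (X i i)^-1 * qform X v 'e_i ^+ 2.
Proof.
move=> sX; have vXi : (v *m (row i X)^T) 0 0 = qform X v 'e_i.
  by rewrite qform_delta tr_row sX colE mulmxA -colE mxE.
have Xiv : (row i X *m v^T) 0 0 = qform X v 'e_i.
  by rewrite -vXi -[row i X *m v^T]trmxK trmx_mul trmxK mxE.
by rewrite qform_mxBZ qform_rank1 vXi Xiv expr2.
Qed.

Lemma psd_schur n (X : 'M[R]_n) i : psd X -> psd (schur X i).
Proof.
move=> pX; have [Xii0|Xii_neq0] := eqVneq (X i i) 0.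
  by rewrite /schur Xii0 invr0 scale0r subr0.
have Xii_gt0 : 0 < X i i by rewrite lt_neqAle eq_sym Xii_neq0 psd_diag_ge0.
have [sX pX'] := pX; split.
  by rewrite /symm /schur linearB linearZ /= trmx_mul trmxK sX.
move=> v; rewrite -/(qform _ _ _) qform_schur //.
have := pX' (v - (qform X v 'e_i / X i i) *: 'e_i).
rewrite -/(qform _ _ _) qform_subZ // qform_delta_delta.
by congr (0 <= _); field; rewrite gt_eqF.
Qed.

Lemma schur_pivot n (X : 'M[R]_n) i : schur X i i i = 0.
Proof.
rewrite schur_entry; have [->|Xii_neq0] := eqVneq (X i i) 0.
  by rewrite !mulr0 subr0.
by rewrite mulKf // subrr.
Qed.

Lemma schur_diag_eq0 n (X : 'M[R]_n) i j : psd X -> X j j = 0 -> schur X i j j = 0.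
Proof.
move=> pX Xjj; have Xij : X i j = 0 by apply: psd_col_eq0 pX Xjj.
by rewrite schur_entry Xjj Xij !mulr0 subr0.
Qed.

Lemma psd_add_scalar n (X : 'M[R]_n) d : psd X -> 0 <= d -> psd (X + d%:M).
Proof.
move=> [sX pX] d_ge0; split; first by rewrite /symm linearD /= tr_scalar_mx sX.
move=> v; rewrite mulmxDr mul_mx_scalar mulmxDl -scalemxAl mxE [X in _ + X]mxE.
rewrite addr_ge0 ?mulr_ge0 ?pX // mxE sumr_ge0 // => j _.
by rewrite mxE -expr2 sqr_ge0.
Qed.

Lemma inner_trace p q (Z X : 'M[R]_(p, q)) : inner Z X = \tr (Z^T *m X).
Proof.
rewrite /inner /mxtrace exchange_big; apply: eq_bigr => j _.
by rewrite mxE; apply: eq_bigr => i _; rewrite mxE.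
Qed.

Lemma innerD p q (Z X Y : 'M[R]_(p, q)) : inner Z (X + Y) = inner Z X + inner Z Y.
Proof. by rewrite !inner_trace mulmxDr mxtraceD. Qed.

Lemma innerZ p q (Z X : 'M[R]_(p, q)) a : inner Z (a *: X) = a * inner Z X.
Proof. by rewrite !inner_trace -scalemxAr mxtraceZ. Qed.

Lemma inner_scalar_mx n (X : 'M[R]_n) a : inner a%:M X = a * \tr X.
Proof. by rewrite inner_trace tr_scalar_mx mul_scalar_mx mxtraceZ. Qed.

Lemma inner_sym p q (Z X : 'M[R]_(p, q)) : inner Z X = inner X Z.
Proof. by apply: eq_bigr => i _; apply: eq_bigr => j _; rewrite mulrC. Qed.

Lemma inner_Lmap n m (C X : 'M[R]_n) (A : 'I_m -> 'M[R]_n) y :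
  inner (Lmap C A y) X = inner C X - \sum_i y i * inner (A i) X.
Proof.
rewrite inner_sym inner_trace /Lmap mulmxBr mulmx_sumr (raddfB (@mxtrace _ _)).
rewrite (raddf_sum (@mxtrace _ _)) inner_sym inner_trace; congr (_ - _).
apply: eq_bigr => i _; rewrite inner_sym inner_trace -scalemxAr; exact: mxtraceZ.
Qed.

Lemma inner_rank1 n (Z : 'M[R]_n) c : symm Z -> inner Z (c^T *m c) = qform Z c c.
Proof.
move=> sZ; rewrite inner_trace sZ mulmxA mxtrace_mulC trace_mx11.
by rewrite mulmxA.
Qed.

(* Pivoting on the diagonal entries one at a time writes [X] as a nonnegative
   combination of rank-one matrices [c^T c], on which [Z] is nonnegative. *)
Lemma psd_inner_ge0 n (Z X : 'M[R]_n) : psd Z -> psd X -> 0 <= inner Z X.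
Proof.
move=> pZ pX; have [sZ pZ'] := pZ.
suff diag_ind : forall k (X : 'M[R]_n), psd X ->
    (forall i : 'I_n, (k <= i)%N -> X i i = 0) -> 0 <= inner Z X.
  by apply: (diag_ind n) => // i; rewrite leqNgt ltn_ord.
elim=> [|k IH] {}X {}pX diag0.
  have -> : X = 0 by apply/matrixP => i j; rewrite mxE psd_row_eq0 ?diag0.
  by rewrite inner_trace mulmx0 mxtrace0.
have [k_lt_n|n_le_k] := ltnP k n; last first.
  by apply: IH => // i k_le_i; have := ltn_ord i; rewrite ltnNge (leq_trans n_le_k).
pose i0 := Ordinal k_lt_n; pose c := row i0 X.
have -> : X = schur X i0 + (X i0 i0)^-1 *: (c^T *m c) by rewrite subrK.
rewrite innerD innerZ inner_rank1 // addr_ge0 //.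
  apply: IH; first exact: psd_schur.
  move=> i; rewrite leq_eqVlt => /predU1P [k_eq_i|k_lt_i].
    have -> : i = i0 by apply: val_inj.
    exact: schur_pivot.
  by rewrite schur_diag_eq0 ?diag0.
by apply: mulr_ge0; [rewrite invr_ge0; exact: psd_diag_ge0 | exact: pZ'].
Qed.

End PsdMatrices.

Section Duality.
Variable R : realType.

Lemma weak_duality n m (C : 'M[R]_n) (A : 'I_m -> 'M[R]_n) b y X c :
  psd (Lmap C A y + c%:M) -> P_feasible A b X ->
  dotv b y <= inner C X + c * \tr X.
Proof.
move=> pL [pX AX]; have := psd_inner_ge0 pL pX.
rewrite inner_sym innerD ![inner X _]inner_sym inner_Lmap inner_scalar_mx.
have -> : \sum_i y i * inner (A i) X = dotv b y.
  by apply: eq_bigr => i _; rewrite AX mulrC.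
lra.
Qed.

Lemma vD_le_vP n m (C : 'M[R]_n) (A : 'I_m -> 'M[R]_n) b :
  (exists X, P_feasible A b X) -> (exists y, D_feasible C A y) ->
  vD C A b <= vP C A b.
Proof.
move=> [X0 PX0] [y0 Dy0]; apply: lb_le_inf; first by exists (inner C X0), X0.
move=> _ [X PX <-]; apply: ge_sup; first by exists (dotv b y0), y0.
move=> _ [y Dy <-]; rewrite -[inner C X]addr0 -(mul0r (\tr X)).
by apply: weak_duality PX; apply: psd_add_scalar.
Qed.

End Duality.

Section RegularizedValue.
Variables (R : realType) (r s m : nat).
Variables (C : 'M[R]_(r + s)) (A : 'I_m -> 'M[R]_(r + s)) (b : 'I_m -> R).
Variables (K alpha : R).

Lemma u2_nondecreasing : 0 <= alpha -> nondecreasing_fun (u2 C A b K alpha).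
Proof.
move=> alpha_ge0 t1 t2 t12; apply: ereal_sup_le => _ [y [pL L12] <-].
exists y => //; split => //.
have -> : (t2 * alpha)%:M = (t1 * alpha)%:M + ((t2 - t1) * alpha)%:M :> 'M[R]_(r + s).
  by apply/matrixP => i j; rewrite !mxE -mulrnDl -mulrDl subrKC.
rewrite addrA.
by apply: psd_add_scalar => //; rewrite mulr_ge0 ?subr_ge0.
Qed.

Lemma u2_ge y t : D_feasible C A y -> ursubmx (Lmap C A y) = 0 ->
  0 <= K * alpha -> 0 <= t * alpha -> ((dotv b y)%:E <= u2 C A b K alpha t)%E.
Proof.
move=> Dy L12 Kalpha_ge0 talpha_ge0; apply: ereal_sup_ubound; exists y => //.
split; first exact: psd_add_scalar.
by rewrite L12 /frob2 inner_trace mulmx0 mxtrace0.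
Qed.

Lemma u2_le X t : P_feasible A b X ->
  (u2 C A b K alpha t <= (inner C X + t * alpha * \tr X)%:E)%E.
Proof.
move=> PX; apply: ge_ereal_sup => _ [y [pL _] <-].
by rewrite lee_fin; apply: weak_duality pL PX.
Qed.

End RegularizedValue.

Lemma nondecreasing_at_right_cvg_real (R : realType) (f : R -> \bar R) a lo t0 :
  {in `]a, +oo[ &, nondecreasing_fun f} ->
  (forall t, a < t -> (lo%:E <= f t)%E) -> a < t0 -> (f t0 < +oo)%E ->
  exists l : R, f x @[x --> a^'+] --> l%:E.
Proof.
move=> ndf lo_le a_lt_t0 ft0_finite.
have := nondecreasing_at_right_cvge (BInfty R false) isT ndf; set E := ereal_inf _ => fE.
have lo_le_E : (lo%:E <= E)%E.
  apply: le_ereal_inf_tmp => y [t]; rewrite /= in_itv /= andbT => a_lt_t <-.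
  exact: lo_le.
have E_le_ft0 : (E <= f t0)%E.
  apply: ereal_inf_lbound; exists t0 => //.
  by rewrite /= in_itv /= andbT; exact: a_lt_t0.
have E_fin : E \is a fin_num.
  by rewrite fin_numElt (lt_le_trans (ltNyr lo)) // (le_lt_trans E_le_ft0).
by exists (fine E); rewrite fineK.
Qed.

Theorem lemma5 (R : realType) (r s m : nat)
  (C : 'M[R]_(r + s)) (A : 'I_m -> 'M[R]_(r + s)) (b : 'I_m -> R) :
  (0 < s)%N ->
  symm C -> (forall i, symm (A i)) ->
  (exists X, P_feasible A b X) ->
  (exists y, D_feasible C A y) ->
  sing_deg_one C A ->
  (forall y, psd (Lmap C A y) <->
     [/\ ursubmx (Lmap C A y) = 0, drsubmx (Lmap C A y) = 0
       & psd (ulsubmx (Lmap C A y))]) ->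
  (exists y, [/\ ursubmx (Lmap C A y) = 0, drsubmx (Lmap C A y) = 0
       & pd (ulsubmx (Lmap C A y))]) ->
  (exists X22 : 'M[R]_s, pd X22 /\
     inner C (block_mx 0 0 0 X22) = 0 /\
     forall i, inner (A i) (block_mx 0 0 0 X22) = 0) ->
  forall M : R, 0 < M ->
  (forall (t : R) (y : 'I_m -> R), 0 <= t ->
     psd (drsubmx (Lmap C A y) + t%:M) ->
     psd ((t * M)%:M - (drsubmx (Lmap C A y) + t%:M))) ->
  let K := M * (vP C A b - vD C A b + 2) in
  forall alpha : R, 0 < alpha ->
  exists l : R,
    u2 C A b K alpha t @[t --> 0^'+] --> l%:E.
Proof.
move=> _ _ _ [X0 PX0] [y0 Dy0] _ L_psd _ _ M M_gt0 _ K alpha alpha_gt0.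
have K_ge0 : 0 <= K.
  have := vD_le_vP (ex_intro _ X0 PX0) (ex_intro _ y0 Dy0).
  by rewrite /K => vD_le; rewrite mulr_ge0 ?ltW //; lra.
have [L12_y0 _ _] := (L_psd y0).1 Dy0.
apply: (@nondecreasing_at_right_cvg_real _ _ 0 (dotv b y0) 1).
- exact: in2W (u2_nondecreasing C A b K (ltW alpha_gt0)).
- move=> t t_gt0; apply: (u2_ge b Dy0 L12_y0);
    by apply: mulr_ge0 => //; apply: ltW.
- exact: ltr01.
- exact: le_lt_trans (u2_le C K alpha 1 PX0) (ltry _).
Qed.
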